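(* Let $1\le i,j\le d$ with $i\ne j$ and $m,n\in\mathbb Z_{<0}$. Then the vertex operator of $v^{ij}(m,n)\mathbf 1\in V_{\mathcal J}=M_r$ is $$Y(v^{ij}(m,n)\mathbf 1,z)=(-1)^{-m-n}\sum_{l\in\mathbb Z}\Big\{\sum_{k\in\mathbb Z}\binom{l+n-k}{-m-1}\binom{k-n-1}{-n-1}v^{ij}(l+m+n+1-k,k)\Big\}z^{-l-1}.$$
   Context: Fix an integer $d\ge 2$ and $r\in\mathbb{C}$. Let $\hat{\mathfrak h}$ be the complex Lie algebra with basis $\{v^i(m)\mid 1\le i\le d,\ m\in\mathbb{Z}\}\cup\{\mathbf c\}$ and bracket $[v^i(m),v^j(n)]=\delta_{m+n,0}\delta_{i,j}\,m\,\mathbf c$, $[\mathbf c,\hat{\mathfrak h}]=0$. In $A=U(\hat{\mathfrak h})/\langle \mathbf c-1\rangle$ let $v^{ij}(m,n)$ be the image of $v^i(m)v^j(n)$; then $v^{ij}(m,n)=v^{ji}(n,m)$ unless $i=j$ and $m=-n$, and $v^{ii}(m,-m)=v^{ii}(-m,m)+m$. Let $\mathcal B=\{v^{ii}(m,n)\mid 1\le i\le d,\ m\le n\}\cup\{v^{ij}(m,n)\mid 1\le i<j\le d,\ m,n\in\mathbb Z\}$; then $\mathcal B\cup\{1\}$ is linearly independent, $\mathcal L:=\mathrm{span}_{\mathbb C}\mathcal B\oplus\mathbb C\subset A$ contains every $v^{ij}(m,n)$ and is closed under $[x,y]=xy-yx$. With $\pi_1,\pi_2$ the projections of $\mathcal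 L$ onto $\mathrm{span}\,\mathcal B$ and onto $\mathbb C$, $[x,y]_r=\pi_1([x,y])+r\pi_2([x,y])$ is a Lie bracket on $\mathcal L$; call this Lie algebra $\mathcal L_r$. Let $\mathcal B_+=\{v^{ij}(m,n)\in\mathcal B\mid m\ge 0\text{ or }n\ge 0\}$, $\mathcal B_-=\{v^{ij}(m,n)\in\mathcal B\mid m,n<0\}$, $\mathcal L_r^+=\mathrm{span}\,\mathcal B_+\oplus\mathbb C$, and $M_r=U(\mathcal L_r)\otimes_{U(\mathcal L_r^+)}\mathbb C\mathbf 1$, where $\mathcal B_+$ acts by $0$ on $\mathbf 1$ and $s\in\mathbb C\subset\mathcal L_r$ acts by the scalar $s$; $M_r$ is graded by giving $x_p\cdots x_1\mathbf 1$ with $x_q=v^{i_qj_q}(m_q,n_q)\in\mathcal B_-$ degree $-\sum_q(m_q+n_q)$. Define operators on $M_r$: $L_r^{ij}(m)=\frac12\sum_{h\in\mathbb Z}v^{ij}(m-h,h)$ if $i\ne j$ or $m\ne0$, and $L_r^{ii}(0)=\frac12 v^{ii}(0,0)+\sum_{h>0}v^{ii}(-h,h)$. Let $\omega_r^{ij}=L_r^{ij}(-2)\mathbf 1$, $\omega=\sum_i\omega_r^{ii}$, and $V_{\mathcal J}\subset M_r$ the span of all $L_r^{i_1j_1}(m_1)\cdots L_r^{i_pj_p}(m_p)\mathbf 1$; it is known that $V_{\mathcal J}=M_r$. By a theorem of Ashihara–Miyamoto, there is a unique linear map $Y(\cdot,z):V_{\mathcal J}\to\mathrm{End}(V_{\mathcal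 J})[[z,z^{-1}]]$ with $Y(\omega_r^{ij},z)=\sum_m L_r^{ij}(m)z^{-m-2}$ and $Y(\mathbf 1,z)=\mathrm{Id}$ making $(V_{\mathcal J},Y,\mathbf 1,\omega)$ a vertex operator algebra of central charge $dr$. Binomial coefficients are $\binom{a}{b}=a(a-1)\cdots(a-b+1)/b!$ for $a\in\mathbb Z$, $b\in\mathbb Z_{\ge0}$. The inner sums act on $M_r$ as operators (only finitely many terms are nonzero on each vector). *)

From HB Require Import structures.
From mathcomp Require Import all_boot all_order all_algebra.
From mathcomp Require Import complex.
From mathcomp Require Import reals.
Set Implicit Arguments. Unset Strict Implicit. Unset Printing Implicit Defensive.
Import Order.TTheory GRing.Theory Num.Theory.
Local Open Scope ring_scope.

Section Defs.
Variable C : fieldType.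

Definition binz (a : int) (b : nat) : C :=
  (\prod_(k < b) (a - k%:Z)%:~R) / (b`!)%:R.

Variable V : lmodType C.

Definition lin (W : lmodType C) (f : V -> W) : Prop :=
  forall (a : C) (x y : V), f (a *: x + y) = a *: f x + f y.

Definition zsum (N : nat) (F : int -> V) : V :=
  \sum_(k < (2 * N).+1) F (k%:Z - N%:Z).

(* scalar part (pi_2) of v^{ab}(s,t) in A, w.r.t. the basis B u {1} *)
Definition scal (d : nat) (a b : 'I_d) (s t : int) : C :=
  if (a == b) && (s + t == 0) && (0 < s) then s%:~R else 0.

End Defs.

(* rho i j m n  is the action of v^{ij}(m,n) in L_r on a C-module W *)
Definition Lr_rel (C : fieldType) (d : nat) (r : C) (W : lmodType C)
  (rho : 'I_d -> 'I_d -> int -> int -> W -> W) : Prop :=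
  let rr a b s t (v : W) := rho a b s t v + ((r - 1) * scal C a b s t) *: v in
  [/\ (forall i j s t, lin (rho i j s t)),
      (forall i j s t v, ~~ ((i == j) && (s + t == 0)) ->
          rho i j s t v = rho j i t s v),
      (forall i s v, rho i i s (- s) v = rho i i (- s) s v + s%:~R *: v) &
      (forall i j k l m n p q v,
          rho i j m n (rho k l p q v) - rho k l p q (rho i j m n v) =
            (if (j == k) && (n + p == 0) then n%:~R *: rr i l m q v else 0)
          + (if (j == l) && (n + q == 0) then n%:~R *: rr i k m p v else 0)
          + (if (i == k) && (m + p == 0) then m%:~R *: rr l j q n v else 0)
          + (if (i == l) && (m + q == 0) then m%:~R *: rr k j p n v else 0))].

Definition Bplus_annih (C : fieldType) (d : nat) (W : lmodType C)
  (rho : 'I_d -> 'I_d -> int -> int -> W -> W) (w : W) : Prop :=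
  forall (i j : 'I_d) (s t : int),
    ((i < j)%N || ((i == j) && (s <= t))) -> ((0 <= s) || (0 <= t)) ->
    rho i j s t w = 0.

(* (V, rho, one) is the induced module M_r = U(L_r) (x)_{U(L_r^+)} C 1,
   characterized by its universal property *)
Definition is_Mr (C : fieldType) (d : nat) (r : C) (V : lmodType C)
  (rho : 'I_d -> 'I_d -> int -> int -> V -> V) (one : V) : Prop :=
  [/\ Lr_rel r rho, Bplus_annih rho one &
    forall (W : lmodType C) (sigma : 'I_d -> 'I_d -> int -> int -> W -> W)
           (w : W), Lr_rel r sigma -> Bplus_annih sigma w ->
      (exists f : V -> W, [/\ lin f, f one = w &
           forall i j s t v, f (rho i j s t v) = sigma i j s t (f v)])
      /\ (forall f g : V -> W,
           lin f -> f one = w -> (forall i j s t v, f (rho i j s t v) = sigma i j s t (f v)) ->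
           lin g -> g one = w -> (forall i j s t v, g (rho i j s t v) = sigma i j s t (g v)) ->
           forall v, f v = g v)].

(* w = L_r^{ij}(m) v  (the defining sum is finite on each vector:
   we require that its symmetric partial sums stabilize at w) *)
Definition Lval (C : fieldType) (d : nat) (V : lmodType C)
  (rho : 'I_d -> 'I_d -> int -> int -> V -> V) (i j : 'I_d) (m : int)
  (v w : V) : Prop :=
  exists N : nat, forall N' : nat, (N <= N')%N ->
    w = if (i != j) || (m != 0) then
          2%:R^-1 *: zsum N' (fun h => rho i j (m - h) h v)
        else
          2%:R^-1 *: rho i i 0 0 v
          + \sum_(1 <= h < N'.+1) rho i i (- (h%:Z)) h%:Z v.

(* Vertex operator algebra (V, Y, one, omega) of central charge c.
   Y a n b = a_(n) b, i.e. Y(a,z) b = sum_n (Y a n b) z^{-n-1}. *)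
Definition is_VOA (C : fieldType) (V : lmodType C) (Y : V -> int -> V -> V)
  (one omega : V) (c : C) : Prop :=
  let L (k : int) := Y omega (k + 1) in
  [/\ [/\
      (forall a n, lin (Y a n)) /\ (forall n b, lin (fun a => Y a n b)),
      (forall a b, exists N : int, forall n, N <= n -> Y a n b = 0),
      (forall n b, Y one n b = if n == -1 then b else 0) /\
      (forall a, Y a (-1) one = a /\ forall n, 0 <= n -> Y a n one = 0) &
      (* Jacobi identity, in Borcherds form *)
      (forall a b v (p q n : int), exists K0 : nat, forall K : nat, (K0 <= K)%N ->
         \sum_(k < K) binz C p k *: Y (Y a (n + k%:Z) b) (p + q - k%:Z) v =
         \sum_(k < K) ((-1) ^+ k * binz C n k) *:
             (Y a (p + n - k%:Z) (Y b (q + k%:Z) v)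
              - (-1) ^ n *: Y b (q + n - k%:Z) (Y a (p + k%:Z) v)))],
      (forall (m n : int) v,
         L m (L n v) - L n (L m v) =
           (m - n)%:~R *: L (m + n) v
           + (if m + n == 0 then ((m ^+ 3 - m)%:~R / 12%:R) * c else 0) *: v),
      (forall a (n : int) b, Y (L (-1) a) n b = - (n%:~R) *: Y a (n - 1) b) &
      (* Z-grading by L(0)-eigenvalues, finite-dimensional pieces,
         bounded below *)
      [/\ (forall v, exists s : seq (int * V),
             (forall x, x \in s -> L 0 x.2 = x.1%:~R *: x.2) /\
             v = \sum_(x <- s) x.2),
          (forall n : int, exists s : seq V, forall v,
             L 0 v = n%:~R *: v ->
             exists cf : nat -> C, v = \sum_(k < size s) cf k *: s`_k) &
          (exists N0 : int, forall n : int, n < N0 ->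
             forall v, L 0 v = n%:~R *: v -> v = 0)]].

From HB Require Import structures.
From mathcomp Require Import all_boot all_order all_algebra.
From mathcomp Require Import complex reals.
From mathcomp Require Import zify ring.
Import Order.TTheory GRing.Theory Num.Theory.
Local Open Scope ring_scope.

(* Write m = -1 - a and n = -1 - b.  For a = b = 0 we have
   v^{ij}(-1,-1) 1 = 2 omega^{ij}, whose modes are the L^{ij}(q - 1); this
   is the formula.  The zero modes D_i = L^{ii}(-1) and
   D_j = L^{jj}(-1) kill 1 and act on v^{ij}(s,t) as derivations lowering s,
   resp. t; hence v^{ij}(-2-a,-1-b) 1 = D_i v^{ij}(-1-a,-1-b) 1 / (a+1), and
   likewise for b.  Since Y(D u, z) = [D, Y(u, z)] for a zero mode D, the
   formula follows by induction on a and b. *)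

Section LinearMaps.
Variables (C : fieldType) (V W : lmodType C) (f : V -> W).
Hypothesis f_lin : lin f.

Lemma lin0 : f 0 = 0.
Proof.
by have := f_lin (-1) 0 0; rewrite scaleN1r oppr0 addr0 scaleN1r addNr.
Qed.

Lemma linZ a x : f (a *: x) = a *: f x.
Proof. by have := f_lin a x 0; rewrite !addr0 lin0 addr0. Qed.

Lemma linD x y : f (x + y) = f x + f y.
Proof. by have := f_lin 1 x y; rewrite !scale1r. Qed.

Lemma linN x : f (- x) = - f x.
Proof. by rewrite -scaleN1r linZ scaleN1r. Qed.

Lemma lin_sum (I : Type) (s : seq I) (P : pred I) (F : I -> V) :
  f (\sum_(k <- s | P k) F k) = \sum_(k <- s | P k) f (F k).
Proof. by elim/big_rec2: _ => [|k y1 y2 _ <-]; rewrite ?lin0 ?linD. Qed.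

Lemma lin_zsum N F : f (zsum N F) = zsum N (fun k => f (F k)).
Proof. exact: lin_sum. Qed.

End LinearMaps.
Arguments lin0 {C V W f}.
Arguments linZ {C V W f}.
Arguments linD {C V W f}.
Arguments linN {C V W f}.
Arguments lin_sum {C V W f}.
Arguments lin_zsum {C V W f}.

Section SymmetricSums.
Variables (C : fieldType) (V : lmodType C).
Implicit Types (F G : int -> V) (N : nat).

Lemma eq_zsum N F G : (forall k, F k = G k) -> zsum N F = zsum N G.
Proof. by move=> eFG; apply: eq_bigr => k _; apply: eFG. Qed.

Lemma zsumD N F G : zsum N (fun k => F k + G k) = zsum N F + zsum N G.
Proof. exact: big_split. Qed.

Lemma zsumB N F G : zsum N (fun k => F k - G k) = zsum N F - zsum N G.
Proof. exact: sumrB. Qed.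

Lemma zsumZ N a F : zsum N (fun k => a *: F k) = a *: zsum N F.
Proof. by rewrite /zsum scaler_sumr. Qed.

Lemma zsumE N F : zsum N F = \sum_(0 <= k < (2 * N).+1) F (k%:Z - N%:Z).
Proof. by rewrite /zsum big_mkord. Qed.

Lemma zsumS N F : zsum N.+1 F = zsum N F + F N.+1%:Z + F (- N.+1%:Z).
Proof.
rewrite !zsumE (_ : (2 * N.+1).+1 = (2 * N).+3) ?mulnS //.
rewrite big_nat_recr //= big_nat_recl //= [F (0%:Z - _) + _]addrC -addrA.
rewrite [F (0%:Z - _) + _]addrC addrA; congr (_ + _ + _).
- by apply: eq_bigr => k _; congr F; lia.
- by congr F; lia.
- by congr F; lia.
Qed.

Lemma zsum_shift N G : G N%:Z = 0 -> G (- N%:Z - 1) = 0 ->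
  zsum N (fun k => G (k - 1)) = zsum N G.
Proof.
move=> GN0 GmN0; rewrite !zsumE big_nat_recl // [RHS]big_nat_recr //=.
rewrite (_ : 0%:Z - N%:Z - 1 = - N%:Z - 1) ?GmN0; last lia.
rewrite (_ : (2 * N)%:Z - N%:Z = N%:Z) ?GN0; last lia.
by rewrite add0r addr0; apply: eq_bigr => k _; congr G; lia.
Qed.

Lemma zsum_delta N (c : int) (X : V) : - N%:Z <= c <= N%:Z ->
  zsum N (fun h => if h == c then X else 0) = X.
Proof.
move=> /andP[cgeN cleN]; have cN_lt : (absz (c + N%:Z)%R < (2 * N).+1)%N by lia.
rewrite /zsum (bigD1 (Ordinal cN_lt)) //= big1 ?addr0.
  by rewrite ifT //; apply/eqP; lia.
move=> k /eqP kNc; case: eqP => // kc; case: kNc; apply: val_inj => /=; lia.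
Qed.

End SymmetricSums.

Lemma scale_half_addrr (C : numFieldType) (V : lmodType C) (X : V) :
  2%:R^-1 *: (X + X) = X.
Proof. by rewrite -mulr2n -scaler_nat scalerA mulVf ?scale1r ?pnatr_eq0. Qed.

Section GeneralizedBinomials.
Variable C : fieldType.

Lemma binz0 (x : int) : binz C x 0 = 1.
Proof. by rewrite /binz big_ord0 divr1. Qed.

Lemma binzS (x : int) n :
  binz C x n.+1 = binz C x n * (x - n%:Z)%:~R / n.+1%:R.
Proof. by rewrite /binz big_ord_recr /= factS natrM invfM; ring. Qed.

Lemma binz0S n : binz C 0 n.+1 = 0.
Proof. by rewrite /binz big_ord_recl /= subrr !mul0r. Qed.

End GeneralizedBinomials.

Section FockModule.
Variables (C : numFieldType) (d : nat) (r : C) (V : lmodType C).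
Variable rho : 'I_d -> 'I_d -> int -> int -> V -> V.
Hypothesis rho_rel : Lr_rel r rho.

Lemma rho_lin i j s t : lin (rho i j s t).
Proof. by case: rho_rel. Qed.

Lemma rho_sym (i j : 'I_d) s t x : i != j -> rho i j s t x = rho j i t s x.
Proof. by case: rho_rel => _ rhoC _ _ ij; apply: rhoC; rewrite (negbTE ij). Qed.

Lemma rho_comm_diag (i j : 'I_d) M N s t x : i != j ->
  rho i i M N (rho i j s t x) - rho i j s t (rho i i M N x) =
    (if N + s == 0 then N%:~R *: rho i j M t x else 0)
  + (if M + s == 0 then M%:~R *: rho i j N t x else 0).
Proof.
move=> ij; have ji : (j == i) = false by rewrite eq_sym (negbTE ij).
case: rho_rel => _ _ _ ->.
rewrite /= eqxx (negbTE ij) /scal (negbTE ij) ji /= !mulr0 !scale0r !addr0.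
by rewrite (rho_sym j i) ?ji.
Qed.

Section ModesOfLii.
Variables (i j : 'I_d) (D E : V -> V).
Hypotheses (ij : i != j).
Hypotheses (D_Lval : forall x, Lval rho i i (-1) x (D x)).
Hypotheses (E_lin : lin E) (E_Lval : forall x, Lval rho i i 0 x (E x)).

Lemma Lm1_comm s t x :
  D (rho i j s t x) - rho i j s t (D x) = (-s)%:~R *: rho i j (s - 1) t x.
Proof.
have [N1 DrhoE] := D_Lval (rho i j s t x); have [N2 DE] := D_Lval x.
pose N := maxn (maxn N1 N2) (absz s).+1.
rewrite (DrhoE N) ?(DE N) /N ?eqxx /=; try lia.
rewrite (linZ (rho_lin _ _ _ _)) (lin_zsum (rho_lin _ _ _ _)) -scalerBr -zsumB.
set X := (-s)%:~R *: rho i j (s - 1) t x.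
rewrite (@eq_zsum _ _ _ _ (fun h => (if h == - s then X else 0)
                                  + (if h == s - 1 then X else 0))).
  by rewrite zsumD !zsum_delta ?scale_half_addrr //; apply/andP; split; lia.
move=> h; rewrite rho_comm_diag // addr_eq0.
have -> : (-1 - h + s == 0) = (h == s - 1).
  by apply/idP/idP => /eqP ?; apply/eqP; lia.
case: eqP => [hs|_]; case: eqP => [hs'|_] //; rewrite ?addr0 ?add0r.
- lia.
- by rewrite /X (_ : -1 - h = s - 1) ?hs //; lia.
- by rewrite /X (_ : -1 - h = - s) ?hs' //; lia.
Qed.

Lemma L0_comm s t x :
  E (rho i j s t x) - rho i j s t (E x) = (-s)%:~R *: rho i j s t x.
Proof.
have [N1 ErhoE] := E_Lval (rho i j s t x); have [N2 EE] := E_Lval x.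
pose N := maxn (maxn N1 N2) (absz s).
rewrite (ErhoE N) ?(EE N) /N ?eqxx /=; try lia.
have rho_ij_lin := rho_lin i j s t.
rewrite (linD rho_ij_lin) (linZ rho_ij_lin) (lin_sum rho_ij_lin).
rewrite opprD addrACA -scalerBr rho_comm_diag // !mulr0z !scale0r !if_same.
rewrite addr0 scaler0 add0r -sumrB.
set X := (-s)%:~R *: rho i j s t x.
rewrite (@eq_big_nat _ _ _ _ _ _ (fun h => if (h == absz s)%N then X else 0)).
  rewrite -big_mkcond big_nat1_eq; case: ifP => // /negbT hs.
  by rewrite /X (_ : s = 0) ?oppr0 ?mulr0z ?scale0r //; lia.
move=> h hN; rewrite rho_comm_diag //.
do 3 (case: eqP => ?); rewrite ?addr0 ?add0r; try done; try (exfalso; lia).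
- by rewrite /X (_ : h%:Z = - s) ?opprK //; lia.
- by rewrite /X (_ : h%:Z = s) //; lia.
Qed.

Lemma Lval_tail_cancel S w y : Lval rho i j S y w ->
  exists N0, forall n, (N0 <= n)%N ->
    rho i j (S - n.+1%:Z) n.+1%:Z y + rho i j (S - - n.+1%:Z) (- n.+1%:Z) y = 0.
Proof.
move=> [N1 w_sums]; exists N1 => n n_ge.
move: (w_sums n n_ge); rewrite (w_sums n.+1 (leqW n_ge)) ij /= zsumS.
move/(scalerI (invr_neq0 _)); rewrite pnatr_eq0 => /(_ isT) /eqP.
by rewrite -addrA -subr_eq0 addrAC subrr add0r => /eqP.
Qed.

(* In a symmetric sum defining some [L^{ij}(S) x], the terms of index [h] and
   [-h] eventually cancel.  Applying [L^{ii}(0)], which weighs them by the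
   distinct factors [S - h] and [S + h], shows that each of them vanishes. *)
Lemma rho_eventually0 (Lij_exists : forall S x, exists w, Lval rho i j S x w)
    S x :
  exists N, forall k : int, (N <= absz k)%N -> rho i j (S - k) k x = 0.
Proof.
have [w1 /Lval_tail_cancel [N1 cancel_x]] := Lij_exists S x.
have [w2 /Lval_tail_cancel [N2 cancel_Ex]] := Lij_exists S (E x).
have rho_E h : rho i j (S - h) h (E x) =
    E (rho i j (S - h) h x) + (S - h)%:~R *: rho i j (S - h) h x.
  rewrite -[(S - h)%:~R *: _]opprK -scaleNr -mulrNz -L0_comm.
  by rewrite opprB [E _ + _]addrC subrK.
have tails0 n : (maxn N1 N2 <= n)%N ->
    rho i j (S - n.+1%:Z) n.+1%:Z x = 0 /\
    rho i j (S - - n.+1%:Z) (- n.+1%:Z) x = 0.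
  move=> n_ge; have := cancel_Ex n ltac:(lia); have := cancel_x n ltac:(lia).
  set a := rho i j _ _ x; set b := rho i j _ _ x => /eqP; rewrite addr_eq0.
  move=> /eqP b_a; rewrite !rho_E -/a -/b b_a (linN E_lin) scalerN.
  rewrite addrACA addNr add0r addrC -scalerBl -intrB => /eqP.
  rewrite scaler_eq0 intr_eq0 => /orP[/eqP|/eqP ->]; first lia.
  by rewrite oppr0.
exists (maxn N1 N2).+1 => k k_ge.
have [a0 b0] := tails0 (absz k).-1 ltac:(lia).
have [k_lt0|k_ge0] := ltP k 0.
- by rewrite (_ : k = - (absz k).-1.+1%:Z) ?b0 //; lia.
- by rewrite (_ : k = (absz k).-1.+1%:Z) ?a0 //; lia.
Qed.

End ModesOfLii.

Lemma Lm1_comm_r (i j : 'I_d) (D : V -> V) : i != j ->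
    (forall x, Lval rho j j (-1) x (D x)) -> forall s t x,
  D (rho i j s t x) - rho i j s t (D x) = (-t)%:~R *: rho i j s (t - 1) x.
Proof.
move=> ij D_Lval s t x; have ji : j != i by rewrite eq_sym.
by rewrite !(rho_sym i j) //; apply: Lm1_comm.
Qed.

Variable one : V.
Hypothesis one_vac : Bplus_annih rho one.

Lemma rho_vac0 (i j : 'I_d) s t : i != j -> (0 <= s) || (0 <= t) ->
  rho i j s t one = 0.
Proof.
move=> ij st_ge0; case: (ltngtP i j) => [ij_lt|ji_lt|/val_inj eij].
- by apply: one_vac; rewrite ?ij_lt.
- by rewrite rho_sym // one_vac // ?ji_lt // orbC.
- by rewrite eij eqxx in ij.
Qed.

Lemma Lm1_vac (i : 'I_d) w : Lval rho i i (-1) one w -> w = 0.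
Proof.
move=> [N w_sum]; rewrite (w_sum N) // eqxx /= /zsum big1 ?scaler0 // => h _.
set k := (_ - N%:Z); have [k_ge0|k_lt0] := lerP 0 k.
  by apply: one_vac; rewrite ?eqxx ?ltnn /= ?k_ge0 ?orbT //; lia.
case: rho_rel => _ rhoC _ _; rewrite rhoC; last by rewrite eqxx /=; apply/eqP; lia.
by apply: one_vac; rewrite ?eqxx ?ltnn /=; lia.
Qed.

Lemma rho_m1m1_vac (i j : 'I_d) w : i != j -> Lval rho i j (-2) one w ->
  rho i j (-1) (-1) one = 2%:R *: w.
Proof.
move=> ij [N w_sum]; rewrite (w_sum N.+1) // ij /=.
rewrite (@eq_zsum _ _ _ _ (fun h => if h == -1 then rho i j (-1) (-1) one else 0)).
  rewrite zsum_delta ?scalerA ?mulfV ?scale1r ?pnatr_eq0 //; lia.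
move=> h; case: eqP => [->//|h_neq]; apply: rho_vac0 => //; lia.
Qed.

End FockModule.
Arguments rho_lin {C d r V rho}.
Arguments rho_sym {C d r V rho} rho_rel {i j}.
Arguments Lm1_comm {C d r V rho} rho_rel {i j D}.
Arguments Lm1_comm_r {C d r V rho} rho_rel {i j D}.
Arguments rho_eventually0 {C d r V rho} rho_rel {i j E}.
Arguments Lm1_vac {C d r V rho} rho_rel {one} one_vac {i w}.
Arguments rho_m1m1_vac {C d r V rho} rho_rel {one} one_vac {i j w}.

(* Borcherds' identity with [p = n = 0]: only the [k = 0] terms survive. *)
Lemma VOA_mode0_comm (C : fieldType) (V : lmodType C) (Y : V -> int -> V -> V)
    one om c :
  is_VOA Y one om c ->
  forall a b q w, Y (Y a 0 b) q w = Y a 0 (Y b q w) - Y b q (Y a 0 w).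
Proof.
case=> [[_ _ _ borcherds] _ _ _] a b q w.
have [K0 HK] := borcherds a b w 0 q 0.
have := HK (maxn K0 1) (leq_maxl _ _).
rewrite (_ : maxn K0 1 = (maxn K0 1).-1.+1); last lia.
rewrite !big_ord_recl /= !big1 ?addr0 => [|k _|k _]; last first.
- by rewrite binz0S scale0r.
- by rewrite binz0S mulr0 scale0r.
by rewrite binz0 expr0 mul1r !scale1r add0r.
Qed.

Arguments VOA_mode0_comm {C V Y one om c}.

Section VertexOperatorOfRho.
Variables (C : numFieldType) (d : nat) (r c : C) (V : lmodType C).
Variable rho : 'I_d -> 'I_d -> int -> int -> V -> V.
Variables (one om : V) (omega : 'I_d -> 'I_d -> V) (Y : V -> int -> V -> V).
Hypotheses (rho_rel : Lr_rel r rho) (one_vac : Bplus_annih rho one).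
Hypothesis Y_VOA : is_VOA Y one om c.
Hypothesis omega_Lval : forall i j, Lval rho i j (-2) one (omega i j).
Hypothesis Y_omega : forall i j m v, Lval rho i j m v (Y (omega i j) (m + 1) v).
Variables (i j : 'I_d).
Hypothesis ij : i != j.

Local Notation D k := (Y (omega k k) 0).

Lemma Y_lin a n : lin (Y a n).
Proof. by case: Y_VOA => [[[]]]. Qed.

Lemma YZl x a q w : Y (a *: x) q w = a *: Y x q w.
Proof. by case: Y_VOA => [[[_ Y_linl] _ _ _] _ _ _]; rewrite (linZ (Y_linl q w)). Qed.

Lemma rho_vac_succl (a b : nat) :
  rho i j (-1 - a.+1%:Z) (-1 - b%:Z) one =
    a.+1%:R^-1 *: D i (rho i j (-1 - a%:Z) (-1 - b%:Z) one).
Proof.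
have := Lm1_comm rho_rel ij (Y_omega i i (-1)) (-1 - a%:Z) (-1 - b%:Z) one.
rewrite (Lm1_vac rho_rel one_vac (Y_omega i i (-1) one)).
rewrite (lin0 (rho_lin rho_rel _ _ _ _)) subr0 => ->.
rewrite scalerA (_ : - (-1 - a%:Z) = a.+1%:Z); last lia.
by rewrite -pmulrn mulVf ?pnatr_eq0 // scale1r; congr rho; lia.
Qed.

Lemma rho_vac_succr (a b : nat) :
  rho i j (-1 - a%:Z) (-1 - b.+1%:Z) one =
    b.+1%:R^-1 *: D j (rho i j (-1 - a%:Z) (-1 - b%:Z) one).
Proof.
have := Lm1_comm_r rho_rel ij (Y_omega j j (-1)) (-1 - a%:Z) (-1 - b%:Z) one.
rewrite (Lm1_vac rho_rel one_vac (Y_omega j j (-1) one)).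
rewrite (lin0 (rho_lin rho_rel _ _ _ _)) subr0 => ->.
rewrite scalerA (_ : - (-1 - b%:Z) = b.+1%:Z); last lia.
by rewrite -pmulrn mulVf ?pnatr_eq0 // scale1r; congr rho; lia.
Qed.

Lemma Y_mode0_zsum {k u q w N e} {f : int -> C} {s t : int -> int} {x} :
    Y u q w = e *: zsum N (fun h => f h *: rho i j (s h) (t h) w) ->
    Y u q (D k w) = e *: zsum N (fun h => f h *: rho i j (s h) (t h) (D k w)) ->
  Y (x *: D k u) q w =
    zsum N (fun h => (x * e * f h) *:
      (D k (rho i j (s h) (t h) w) - rho i j (s h) (t h) (D k w))).
Proof.
move=> Yw YDw; rewrite YZl (VOA_mode0_comm Y_VOA) Yw YDw.
rewrite (linZ (Y_lin _ _)) (lin_zsum (Y_lin _ _)) -scalerBr -zsumB -!zsumZ.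
by apply: eq_zsum => h; rewrite (linZ (Y_lin _ _)) -scalerBr !scalerA.
Qed.

Definition Yrho_formula (a b : nat) : Prop :=
  forall q w, exists N, forall N', (N <= N')%N ->
    Y (rho i j (-1 - a%:Z) (-1 - b%:Z) one) q w = (-1) ^+ (a + b) *:
      zsum N' (fun k => (binz C (q - 1 - b%:Z - k) a * binz C (k + b%:Z) b)
                          *: rho i j (q - 1 - a%:Z - b%:Z - k) k w).

Lemma Yrho_formula00 : Yrho_formula 0 0.
Proof.
move=> q w; have [N] := Y_omega i j (q - 1) w; rewrite subrK => YE.
exists N => N' N'_ge; rewrite (rho_m1m1_vac rho_rel one_vac ij (omega_Lval i j)) YZl.
rewrite (YE N' N'_ge) ij /= scalerA mulfV ?pnatr_eq0 // scale1r expr0 scale1r.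
by apply: eq_zsum => k; rewrite !binz0 mulr1 scale1r; congr rho; lia.
Qed.

Lemma Yrho_formula_succl a b : Yrho_formula a b -> Yrho_formula a.+1 b.
Proof.
move=> Yab q w; have [N1 Yw] := Yab q w; have [N2 YDw] := Yab q (D i w).
exists (maxn N1 N2) => N' N'_ge.
rewrite rho_vac_succl (Y_mode0_zsum (Yw N' _) (YDw N' _)); try lia.
rewrite -zsumZ; apply: eq_zsum => k.
rewrite (Lm1_comm rho_rel ij (Y_omega i i (-1))) !scalerA.
rewrite (_ : q - 1 - a%:Z - b%:Z - k - 1 = q - 1 - a.+1%:Z - b%:Z - k); last lia.
congr (_ *: _); rewrite binzS addSn exprS.
rewrite (_ : - (q - 1 - a%:Z - b%:Z - k) = - (q - 1 - b%:Z - k - a%:Z)); last lia.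
by rewrite mulrNz; field; rewrite -mulrS pnatr_eq0.
Qed.

(* The [D j]-step lowers the second index, so the sum has to be reindexed;
   the two boundary terms vanish by [rho_eventually0]. *)
Lemma Yrho_formula_succr a b : Yrho_formula a b -> Yrho_formula a b.+1.
Proof.
move=> Yab q w; have [N1 Yw] := Yab q w; have [N2 YDw] := Yab q (D j w).
pose T := q - 1 - a%:Z - b.+1%:Z.
have [N3 rho_w0] := rho_eventually0 rho_rel ij (Y_lin _ _) (Y_omega i i 0)
  (fun S x => ex_intro _ _ (Y_omega i j S x)) T w.
exists (maxn (maxn N1 N2) N3) => N' N'_ge.
rewrite rho_vac_succr (Y_mode0_zsum (Yw N' _) (YDw N' _)); try lia.
pose G k := ((b.+1%:R^-1 * (-1) ^+ (a + b) *
  (binz C (q - 1 - b%:Z - (k + 1)) a * binz C (k + 1 + b%:Z) b))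
  * (- (k + 1))%:~R) *: rho i j (T - k) k w.
rewrite (@eq_zsum _ _ _ _ (fun k => G (k - 1))) => [|k]; last first.
  rewrite (Lm1_comm_r rho_rel ij (Y_omega j j (-1))) scalerA /G subrK.
  by congr (_ *: rho _ _ _ _ _); rewrite /T; lia.
rewrite zsum_shift ?/G ?rho_w0 ?scaler0 //; try lia.
rewrite -zsumZ; apply: eq_zsum => k; rewrite scalerA; congr (_ *: _).
rewrite (_ : q - 1 - b%:Z - (k + 1) = q - 1 - b.+1%:Z - k); last lia.
rewrite (_ : k + b.+1%:Z = k + 1 + b%:Z) ?binzS; last lia.
rewrite (_ : k + 1 + b%:Z - b%:Z = k + 1); last lia.
by rewrite addnS exprS mulrNz; field; rewrite -mulrS pnatr_eq0.
Qed.

Lemma Yrho_formulaP a b : Yrho_formula a b.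
Proof.
elim: a => [|a IHa]; last exact: Yrho_formula_succl.
by elim: b => [|b IHb]; [exact: Yrho_formula00 | exact: Yrho_formula_succr].
Qed.

End VertexOperatorOfRho.
Arguments Yrho_formulaP {C d r c V rho one om omega Y} rho_rel one_vac Y_VOA
  omega_Lval Y_omega {i j}.

Local Open Scope complex_scope.

Theorem lemma3p5 (R : realType) (d : nat) (r : R[i]) (V : lmodType R[i])
  (rho : 'I_d -> 'I_d -> int -> int -> V -> V) (one : V)
  (omega : 'I_d -> 'I_d -> V) (Y : V -> int -> V -> V) :
  (2 <= d)%N ->
  is_Mr r rho one ->
  (forall i j, Lval rho i j (-2) one (omega i j)) ->
  is_VOA Y one (\sum_(i < d) omega i i) (d%:R * r) ->
  (forall i j (m : int) v, Lval rho i j m v (Y (omega i j) (m + 1) v)) ->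
  (forall n v, Y one n v = if n == -1 then v else 0) ->
  forall (i j : 'I_d) (m n : int), i != j -> m < 0 -> n < 0 ->
  forall (l : int) (v : V),
    exists N : nat, forall N' : nat, (N <= N')%N ->
      Y (rho i j m n one) l v =
        (-1) ^ (- m - n) *:
          zsum N' (fun k => (binz R[i] (l + n - k) `|- m - 1|%N
                             * binz R[i] (k - n - 1) `|- n - 1|%N)
                            *: rho i j (l + m + n + 1 - k) k v).
Proof.
move=> _ [rho_rel one_vac _] omega_Lval Y_VOA Y_omega _ i j m n ij m_lt0 n_lt0.
move=> l v; set a := `|- m - 1|%N; set b := `|- n - 1|%N.
have m_a : m = -1 - a%:Z by rewrite /a; lia.
have n_b : n = -1 - b%:Z by rewrite /b; lia.
have [N Ymn] := Yrho_formulaP rho_rel one_vac Y_VOA omega_Lval Y_omega ij a b l v.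
exists N => N' N'_ge; rewrite {1}m_a {1}n_b (Ymn N' N'_ge).
rewrite (_ : - m - n = (a + b).+2%:Z); last lia.
rewrite -exprnP !exprS !mulN1r opprK; congr (_ *: _); apply: eq_zsum => k.
by congr (binz _ _ _ * binz _ _ _ *: rho _ _ _ _ _); lia.
Qed.
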